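(* Let $\rho$ be a regular ordinal, let $\Gamma$ be a presheaf on $\mathbb{T}$, let $X$ be a family over $\Gamma$ all of whose fibres $X(\mathcal{E},\vartheta,\gamma)$ have cardinality strictly smaller than $\rho$, and let $\varphi$ be a predicate over $(\Gamma.X)\times\mathrm{Clk}$. Then for every object $(\mathcal{E},\vartheta)$ of $\mathbb{T}$ and every $\gamma\in\Gamma(\mathcal{E},\vartheta)$ the following are equivalent: (A) there exists $x\in X(\mathcal{E},\vartheta,\gamma)$ such that for all $\alpha<\rho$, $\star\in\varphi(\mathcal{E}\cup\{\lambda_\mathcal{E}\},\vartheta[\lambda_\mathcal{E}\mapsto\alpha],\iota\cdot\gamma,\iota\cdot x,\lambda_\mathcal{E})$; (B) for all $\alpha<\rho$ there exists $x\in X(\mathcal{E}\cup\{\lambda_\mathcal{E}\},\vartheta[\lambda_\mathcal{E}\mapsto\alpha],\iota\cdot\gamma)$ such that $\star\in\varphi(\mathcal{E}\cup\{\lambda_\mathcal{E}\},\vartheta[\lambda_\mathcal{E}\mapsto\alpha],\iota\cdot\gamma,x,\lambda_\mathcal{E})$. (That is, in the model, $\exists x{:}X.\,\forall\kappa.\,\varphi(x,\kappa)$ equals $\forall\kappa.\,\exists x{:}X.\,\varphi(x,\kappa)$.)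
   Context: Fix a limit ordinal $\rho$ (here assumed regular, i.e. equal to its own cofinality) and a countably infinite set of clock names. The category $\mathbb{T}$ has objects pairs $(\mathcal{E},\vartheta)$ with $\mathcal{E}$ a finite set of clock names and $\vartheta:\mathcal{E}\to\rho$; a morphism $(\mathcal{E},\vartheta)\to(\mathcal{E}',\vartheta')$ is a function $\sigma:\mathcal{E}\to\mathcal{E}'$ with $\vartheta'\circ\sigma\le\vartheta$ pointwise. A presheaf on $\mathbb{T}$ is a covariant functor $\mathbb{T}\to\mathsf{Set}$; write $\sigma\cdot x$ for the action of $\sigma$. $\mathrm{Clk}$ is the presheaf $\mathrm{Clk}(\mathcal{E},\vartheta)=\mathcal{E}$ with $\sigma\cdot\lambda=\sigma(\lambda)$. For a presheaf $\Gamma$, $\int\Gamma$ is its category of elements, with objects $(\mathcal{E},\vartheta,\gamma)$; a presheaf $X$ over $\int\Gamma$ is a covariant functor $\int\Gamma\to\mathsf{Set}$ with fibres $X(\mathcal{E},\vartheta,\gamma)$ and maps $\sigma\cdot(-)$. $X$ is invariant under clock introduction if for all $(\mathcal{E},\vartheta)$, $\gamma$, clock names $\lambda\notin\mathcal{E}$ and $\alpha<\rho$, the map $\iota\cdot(-): X(\mathcal{E},\vartheta,\gamma)\to X(\mathcal{E}\cup\{\lambda\},\vartheta[\lambda\mapsto\alpha],\iota\cdot\gamma)$ induced by the inclusion $\iota:\mathcal{E}\to\mathcal{E}\cup\{\lambda\}$ is a bijection. A family over $\Gamma$ is a presheaf over $\int\Gamma$ invariant under clock introduction; a predicate is a family all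 of whose fibres are subsets of $\{\star\}$. The comprehension $\Gamma.X$ is the presheaf $(\Gamma.X)(\mathcal{E},\vartheta)=\{(\gamma,x)\mid\gamma\in\Gamma(\mathcal{E},\vartheta), x\in X(\mathcal{E},\vartheta,\gamma)\}$; thus a predicate $\varphi$ over $(\Gamma.X)\times\mathrm{Clk}$ has fibres $\varphi(\mathcal{E},\vartheta,\gamma,x,\lambda)\subseteq\{\star\}$ for $\lambda\in\mathcal{E}$. A function assigning to each finite set $\mathcal{E}$ of clock names a clock name $\lambda_\mathcal{E}\notin\mathcal{E}$ is fixed, and $\iota$ denotes the inclusion $\mathcal{E}\to\mathcal{E}\cup\{\lambda_\mathcal{E}\}$, viewed as a morphism $(\mathcal{E},\vartheta)\to(\mathcal{E}\cup\{\lambda_\mathcal{E}\},\vartheta[\lambda_\mathcal{E}\mapsto\alpha])$. *)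

From HB Require Import structures.
From mathcomp Require Import all_boot finmap.
Set Implicit Arguments. Unset Strict Implicit. Unset Printing Implicit Defensive.
Local Open Scope fset_scope.

(** Clock names are natural numbers (a countably infinite set).
    Elements of a finite set of clock names E, seen as a type. *)
Definition cl (E : {fset nat}) := {x : nat | x \in E}.

Lemma inclP (E : {fset nat}) (l : nat) (x : cl E) : sval x \in E `|` [fset l].
Proof. by rewrite in_fsetU (svalP x). Qed.

Definition incl (E : {fset nat}) (l : nat) (x : cl E) : cl (E `|` [fset l]) :=
  exist _ (sval x) (inclP l x).

Lemma newclP (E : {fset nat}) (l : nat) : l \in E `|` [fset l].
Proof. by rewrite in_fsetU in_fset1 eqxx orbT. Qed.

Definition newcl (E : {fset nat}) (l : nat) : cl (E `|` [fset l]) :=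
  exist _ l (newclP E l).

Section Ordinal.
(** The ordinal rho is represented by a type O of its elements (the ordinals
    alpha < rho) together with the strict order lt. *)
Variables (O : Type) (lt : O -> O -> Prop).

Definition le (a b : O) : Prop := a = b \/ lt a b.

Definition is_wellorder : Prop :=
  (forall a, ~ lt a a) /\
  (forall a b c, lt a b -> lt b c -> lt a c) /\
  (forall a b, lt a b \/ a = b \/ lt b a) /\
  well_founded lt.

(** rho is a limit ordinal: nonzero and not a successor *)
Definition is_limit : Prop := inhabited O /\ forall a, exists b, lt a b.

Definition cofinal (A : Type) (f : A -> O) : Prop :=
  forall c, exists i, le c (f i).

(** rho = cf(rho): no ordinal alpha < rho admits a cofinal map alpha -> rho *)
Definition is_regular : Prop :=
  forall (a : O) (f : {b : O | lt b a} -> O), ~ cofinal f.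

Definition card_lt_rho (A : Type) : Prop :=
  (exists f : A -> O, injective f) /\ ~ (exists g : O -> A, injective g).

(** Objects of the category T: (E, theta) with theta : E -> rho *)
Record obj := Obj { clocks : {fset nat}; valu : cl clocks -> O }.
Arguments valu o _ : clear implicits.

Definition Hom (o o' : obj) :=
  {f : cl (clocks o) -> cl (clocks o') | forall x, le (valu o' (f x)) (valu o x)}.

Definition hfun (o o' : obj) (s : Hom o o') : cl (clocks o) -> cl (clocks o') :=
  proj1_sig s.
Arguments hfun {o o'} s _.

(** theta[l |-> a] on E ∪ {l} *)
Definition ext (o : obj) (l : nat) (a : O) : obj :=
  @Obj (clocks o `|` [fset l])
    (fun x => match @insub _ (fun y => y \in clocks o) (cl (clocks o)) (sval x) with
              | Some y => valu o y
              | None => a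
              end).

Lemma iotaP (o : obj) (l : nat) (a : O) (x : cl (clocks o)) :
  le (valu (ext o l a) (incl l x)) (valu o x).
Proof. by left; rewrite /= valK. Qed.

Definition iotaH (o : obj) (l : nat) (a : O) : Hom o (ext o l a) :=
  exist _ (@incl (clocks o) l) (@iotaP o l a).

(** Presheaves (covariant functors T -> Set): data, and functor laws *)
Record psh := Psh {
  pob : obj -> Type;
  pact : forall o o' : obj, Hom o o' -> pob o -> pob o' }.
Arguments pob p o : clear implicits.
Arguments pact p {o o'} _ _.

Definition is_presheaf (P : psh) : Prop :=
  (forall o (s : Hom o o) (x : pob P o),
      (forall y, hfun s y = y) -> pact P s x = x) /\
  (forall o1 o2 o3 (s : Hom o1 o2) (t : Hom o2 o3) (u : Hom o1 o3) (x : pob P o1),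
      (forall y, hfun u y = hfun t (hfun s y)) -> pact P u x = pact P t (pact P s x)).

(** Presheaves over the category of elements of G: a morphism
    (o,g) -> (o',g') is a morphism s : o -> o' with s . g = g'. *)
Record epsh (G : psh) := EPsh {
  eob : forall o : obj, pob G o -> Type;
  eact : forall (o o' : obj) (s : Hom o o') (g : pob G o) (g' : pob G o'),
           pact G s g = g' -> eob g -> eob g' }.
Arguments eob {G} e {o} _.
Arguments eact {G} e {o o'} s {g g'} _ _.

Definition is_epresheaf (G : psh) (X : epsh G) : Prop :=
  (forall o (s : Hom o o) (g : pob G o) (h : pact G s g = g) (x : eob X g),
      (forall y, hfun s y = y) -> eact X s h x = x) /\
  (forall o1 o2 o3 (s : Hom o1 o2) (t : Hom o2 o3) (u : Hom o1 o3)
          (g1 : pob G o1) (g2 : pob G o2) (g3 : pob G o3)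
          (h1 : pact G s g1 = g2) (h2 : pact G t g2 = g3) (h3 : pact G u g1 = g3)
          (x : eob X g1),
      (forall y, hfun u y = hfun t (hfun s y)) -> eact X u h3 x = eact X t h2 (eact X s h1 x)).

(** Families: presheaves over ∫G invariant under clock introduction *)
Definition is_family (G : psh) (X : epsh G) : Prop :=
  is_epresheaf X /\
  forall (o : obj) (g : pob G o) (l : nat) (a : O), l \notin clocks o ->
    bijective (fun x : eob X g =>
                 eact X (iotaH o l a) (erefl (pact G (iotaH o l a) g)) x).

(** Predicates: families whose fibres are subsingletons (subsets of {*}) *)
Definition is_predicate (G : psh) (P : epsh G) : Prop :=
  is_family P /\ forall o (g : pob G o) (x y : eob P g), x = y.

Definition Clk : psh := @Psh (fun o => cl (clocks o)) (fun o o' s => hfun s).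

Definition compr (G : psh) (X : epsh G) : psh :=
  @Psh (fun o => {g : pob G o & eob X g})
       (fun o o' s p => existT _ (pact G s (projT1 p))
                          (eact X s (erefl (pact G s (projT1 p))) (projT2 p))).

Definition prodp (A B : psh) : psh :=
  @Psh (fun o => (pob A o * pob B o)%type)
       (fun o o' s p => (pact A s p.1, pact B s p.2)).

End Ordinal.

Arguments pob {O lt} p o.
Arguments pact {O lt} p {o o'} s x.
Arguments eob {O lt G} e {o} g.
Arguments eact {O lt G} e {o o'} s {g g'} h x.

From HB Require Import structures.
From mathcomp Require Import all_boot finmap.
From Stdlib Require Import Classical ClassicalEpsilon FunctionalExtensionality.

Set Implicit Arguments.
Unset Strict Implicit.

(** If the quantifier swap failed, choosing for each [x] a stage [c x] where
    [x] stops working would give a map [c] from the fibre to [rho] which is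
    cofinal, because [phi] is stable under lowering the new clock's value.
    By regularity, every cofinal map into [rho] admits a strictly increasing
    section [rho -> fibre] built by transfinite recursion; this injection
    contradicts [|fibre| < |rho|]. *)

Section Regular.
Variables (O : Type) (lt : O -> O -> Prop).
Hypotheses (lt_wo : is_wellorder lt) (lt_regular : is_regular lt).

Let lt_wf : well_founded lt := proj2 (proj2 (proj2 lt_wo)).

Lemma regular_bounded (a : O) (f : {b : O | lt b a} -> O) :
  exists c0, forall i, lt (f i) c0.
Proof.
have [_ [_ [tri _]]] := lt_wo.
have /not_all_ex_not [c0 Hc0] := @lt_regular a f.
exists c0 => i; case: (tri (f i) c0) => [//|[eq_fc|lt_cf]]; case: Hc0; exists i.
- by left.
- by right.
Qed.

Section CofinalSection.
Variables (A : Type) (c : A -> O).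
Hypothesis c_cofinal : cofinal lt c.

Lemma cofinal_inhabited (a : O) : inhabited A.
Proof. by case: (c_cofinal a) => y _; exact: inhabits y. Qed.

(* That such a point exists is where regularity enters. *)
Definition cofinal_step (a : O) (rec : forall b, lt b a -> A) : A :=
  epsilon (cofinal_inhabited a)
    (fun y => forall b (hb : lt b a), lt (c (rec b hb)) (c y)).

Definition cofinal_section : O -> A := Fix lt_wf (fun _ => A) cofinal_step.

Lemma cofinal_sectionE (a : O) :
  cofinal_section a = @cofinal_step a (fun b _ => cofinal_section b).
Proof.
apply: (Fix_eq _ (fun _ => A)) => x f f' eq_f.
suff -> : f = f' by [].
by apply: functional_extensionality_dep => b; apply: functional_extensionality.
Qed.

Lemma cofinal_section_increasing (a b : O) :
  lt b a -> lt (c (cofinal_section b)) (c (cofinal_section a)).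
Proof.
have [_ [lt_trans _]] := lt_wo.
move: b; rewrite [cofinal_section a]cofinal_sectionE.
apply: (epsilon_spec (cofinal_inhabited a)
  (fun y => forall b (hb : lt b a), lt (c (cofinal_section b)) (c y))).
have [c0 Hc0] := regular_bounded (fun b : {b | lt b a} => c (cofinal_section (sval b))).
have [y c0y] := c_cofinal c0; exists y => b hb.
case: c0y => [<-|c0y]; first exact: (Hc0 (exist _ b hb)).
exact: lt_trans (Hc0 (exist _ b hb)) c0y.
Qed.

Lemma cofinal_section_inj : injective cofinal_section.
Proof.
have [irr [_ [tri _]]] := lt_wo.
move=> a b eq_ab; case: (tri a b) => [|[//|]] /cofinal_section_increasing;
  by rewrite eq_ab => /irr.
Qed.

End CofinalSection.

Lemma regular_exists_forall (A : Type) (Q : A -> O -> Prop) :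
  (forall y a b, le lt a b -> Q y b -> Q y a) ->
  ~ (exists g : O -> A, injective g) ->
  (forall a, exists y, Q y a) -> exists y, forall a, Q y a.
Proof.
move=> Q_down no_inj Q_ex; apply: NNPP => no_y.
have /choice [c Hc] : forall y, exists a, ~ Q y a.
  by move=> y; apply: NNPP => Hy; apply: no_y; exists y => a;
     apply: NNPP => Hq; apply: Hy; exists a.
have [_ [_ [tri _]]] := lt_wo.
have c_cofinal : cofinal lt c.
  move=> a; have [y Qya] := Q_ex a; exists y.
  case: (tri a (c y)) => [|[|lt_ca]]; [by right | by left |].
  by case: (Hc y); apply: Q_down Qya; right.
by apply: no_inj; exists (cofinal_section c_cofinal); apply: cofinal_section_inj.
Qed.

End Regular.

Definition ext_le_hom (O : Type) (lt : O -> O -> Prop) (o : obj O) (l : nat)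
    (a b : O) (hab : le lt a b) : Hom lt (ext o l b) (ext o l a).
Proof.
exists id => x /=; case: (insub _) => [y|]; [by left | exact: hab].
Defined.

Section Model.
Variables (O : Type) (lt : O -> O -> Prop).
Variables (G : psh lt) (X : epsh G) (phi : epsh (prodp (compr X) (Clk lt))).
Variables (o : obj O) (g : pob G o) (l : nat).

Definition iota_fib (a : O) (y : eob X g) : eob X (pact G (iotaH lt o l a) g) :=
  eact X (iotaH lt o l a) (erefl _) y.

Definition phi_at (y : eob X g) (a : O) : Prop :=
  inhabited (@eob _ _ _ phi (ext o l a)
    (existT _ (pact G (iotaH lt o l a) g) (iota_fib a y), newcl (clocks o) l)).

Lemma iota_fib_surj (HX : is_family X) (Hl : l \notin clocks o) (a : O)
    (x : eob X (pact G (iotaH lt o l a) g)) :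
  exists y, iota_fib a y = x.
Proof. by case: (proj2 HX o g l a Hl) => inv _ inv_K; exists (inv x); apply: inv_K. Qed.

Lemma phi_at_le (HG : is_presheaf G) (HX : is_epresheaf X) (y : eob X g) (a b : O) :
  le lt a b -> phi_at y b -> phi_at y a.
Proof.
move=> hab [q]; pose m := ext_le_hom o l hab.
have eq_g : pact G m (pact G (iotaH lt o l b) g) = pact G (iotaH lt o l a) g.
  by symmetry; apply: (proj2 HG).
have eq_y : eact X m eq_g (iota_fib b y) = iota_fib a y.
  by symmetry; apply: (proj2 HX).
have eq_pt : pact (prodp (compr X) (Clk lt)) m
    (existT _ (pact G (iotaH lt o l b) g) (iota_fib b y), newcl (clocks o) l) =
    (existT _ (pact G (iotaH lt o l a) g) (iota_fib a y), newcl (clocks o) l).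
  rewrite /= -{}eq_y; congr (_, _); move: eq_g (iota_fib b y).
  by case: _ / => ?.
exact: inhabits (eact phi m eq_pt q).
Qed.

End Model.

Theorem mainTheorem5 (O : Type) (lt : O -> O -> Prop)
  (Hwo : is_wellorder lt) (Hlim : is_limit lt) (Hreg : is_regular lt)
  (fresh : {fset nat} -> nat) (Hfresh : forall E, fresh E \notin E)
  (G : psh lt) (HG : is_presheaf G)
  (X : epsh G) (HX : is_family X)
  (Hcard : forall (o : obj O) (g : pob G o), card_lt_rho O (eob X g))
  (phi : epsh (prodp (compr X) (Clk lt))) (Hphi : is_predicate phi)
  (o : obj O) (g : pob G o) :
  let l := fresh (clocks o) in
  (exists x : eob X g, forall a : O,
     inhabited (@eob _ _ _ phi (ext o l a)
       (existT _ (pact G (iotaH lt o l a) g)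
                 (eact X (iotaH lt o l a) (erefl (pact G (iotaH lt o l a) g)) x),
        newcl (clocks o) l)))
  <->
  (forall a : O, exists x : eob X (pact G (iotaH lt o l a) g),
     inhabited (@eob _ _ _ phi (ext o l a)
       (existT _ (pact G (iotaH lt o l a) g) x, newcl (clocks o) l))).
Proof.
move=> l; split=> [[x Hx] a|HB]; first by exists (iota_fib l a x); exact: Hx.
apply: (regular_exists_forall Hwo Hreg (Q := phi_at phi (g := g) l)).
- exact: (phi_at_le (phi := phi) HG (proj1 HX)).
- exact: proj2 (Hcard o g).
- move=> a; have [x Hx] := HB a.
  have [y eq_yx] := iota_fib_surj HX (Hfresh (clocks o)) x.
  by exists y; rewrite /phi_at eq_yx.
Qed.
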